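(* Let $G$ be a graph and $T$ a tree 3-spanner of $G$. Let $u,p,q$ be vertices of $G$ such that $u$ lies on the $p,q$-path of $T$ and $p,q\notin N_T[u]$. Then every $p,q$-path of $G$ contains a vertex of $N_T[u]$.
   Context: Graphs are finite, simple and loopless. $N_T[u]$ denotes the closed neighbourhood of $u$ in $T$, that is, $u$ together with its neighbours in $T$. A tree 3-spanner of $G$ is a spanning subgraph $T$ of $G$ that is a tree and satisfies $d_T(a,b)\le 3\,d_G(a,b)$ for all vertices $a,b$ of $G$. *)

From mathcomp Require Import all_boot.
Set Implicit Arguments. Unset Strict Implicit. Unset Printing Implicit Defensive.

Definition simple_graph (V : finType) (e : rel V) : Prop :=
  symmetric e /\ irreflexive e.

(* A walk of length (size s) from x to y: the vertex sequence x :: s. *)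
Definition walk (V : finType) (e : rel V) (x y : V) (s : seq V) : Prop :=
  path e x s /\ last x s = y.

Definition gpath (V : finType) (e : rel V) (x y : V) (s : seq V) : Prop :=
  walk e x y s /\ uniq (x :: s).

Definition is_dist (V : finType) (e : rel V) (x y : V) (d : nat) : Prop :=
  (exists s, walk e x y s /\ size s = d) /\
  (forall s, walk e x y s -> d <= size s).

Definition has_cycle (V : finType) (e : rel V) : Prop :=
  exists x s, 2 <= size s /\ uniq (x :: s) /\ path e x s /\ e (last x s) x.

Definition is_tree (V : finType) (e : rel V) : Prop :=
  simple_graph e /\ (forall x y : V, connect e x y) /\ ~ has_cycle e.

Definition subgraph (V : finType) (t g : rel V) : Prop :=
  forall x y, t x y -> g x y.

Definition tree_3_spanner (V : finType) (g t : rel V) : Prop :=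
  subgraph t g /\ is_tree t /\
  (forall a b dT dG, is_dist t a b dT -> is_dist g a b dG -> dT <= 3 * dG).

Definition closed_nbhd (V : finType) (t : rel V) (u : V) : pred V :=
  [pred x | (x == u) || t u x].

From mathcomp Require Import all_boot.
Set Implicit Arguments. Unset Strict Implicit. Unset Printing Implicit Defensive.

(* Let [T - u] be the tree with the vertex [u] deleted.  Since [u] is an inner
   vertex of the tree path from [p] to [q], the two tree neighbours of [u] on that
   path would close a cycle through [u] if they were joined in [T - u]; hence [p]
   and [q] lie in different components of [T - u].  On the other hand an edge [xy]
   of [G] has [d_T(x,y) <= 3], and a tree walk of length at most 3 between two
   vertices outside [N_T[u]] cannot pass through [u].  So a [p,q]-path of [G]
   avoiding [N_T[u]] would connect [p] and [q] in [T - u]. *)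

Lemma is_dist_exists (V : finType) (e : rel V) (x y : V) :
  connect e x y -> exists d, is_dist e x y d.
Proof.
move=> /connectP[w pw ->].
pose P n := [exists w' : n.-tuple V, path e x w' && (last x w' == last x w)].
have P_ex : exists n, P n.
  by exists (size w); apply/existsP; exists (in_tuple w); rewrite pw eqxx.
case: (ex_minnP P_ex) => d /existsP[w' /andP[pw' /eqP lw']] d_min.
exists d; split; first by exists w'; rewrite size_tuple.
by move=> s [ps ls]; apply: d_min; apply/existsP; exists (in_tuple s); rewrite ps ls eqxx.
Qed.

Lemma is_dist_edge (V : finType) (e : rel V) (x y : V) :
  irreflexive e -> e x y -> is_dist e x y 1.
Proof.
move=> e_irr exy; split; first by exists [:: y]; rewrite /walk /= exy.
case=> [|z w] [_ /= yx] //; by move: exy; rewrite -yx e_irr.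
Qed.

Lemma spanner_edge_walk (V : finType) (g t : rel V) (x y : V) :
  irreflexive g -> tree_3_spanner g t -> g x y ->
  exists2 w, walk t x y w & size w <= 3.
Proof.
move=> g_irr [_ [[_ [t_conn _]] t_span]] gxy.
have [_ [[w [wxy <-]] d_min]] := is_dist_exists (t_conn x y).
have dT : is_dist t x y (size w) by split; first by exists w.
by exists w => //; rewrite -(muln1 3) (t_span _ _ _ _ dT (is_dist_edge g_irr gxy)).
Qed.

Lemma connect_path_in (V : finType) (e f : rel V) (P : pred V) (x : V) (w : seq V) :
  {in P &, subrel e (connect f)} ->
  path e x w -> all P (x :: w) -> connect f x (last x w).
Proof.
move=> ef; elim: w x => [|y w IHw] x /=; first by rewrite connect0.
case/andP=> exy pw /and3P[Px Py Pw].
by apply: connect_trans (ef _ _ Px Py exy) (IHw _ pw _); rewrite /= Py.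
Qed.

Section DeleteVertex.

Variables (V : finType) (t : rel V) (u : V).
Hypothesis t_sym : symmetric t.

Definition del_vertex : rel V := [rel a b | [&& t a b, a != u & b != u]].

Lemma del_vertex_sym : symmetric del_vertex.
Proof. by move=> a b; rewrite /del_vertex /= t_sym andbA andbAC -andbA. Qed.

Lemma path_del_vertex x w :
  x != u -> path del_vertex x w = path t x w && (u \notin w).
Proof.
elim: w x => [|y w IHw] x xu //=.
rewrite {1}/del_vertex /= xu inE; have [->|yu] := eqVneq u y.
  by rewrite !andbF.
by rewrite IHw 1?eq_sym // andbT andbA.
Qed.

Lemma connect_del_vertex x w :
  path t x w -> u \notin x :: w -> connect del_vertex x (last x w).
Proof.
rewrite inE negb_or eq_sym => pw /andP[xu uw].
by apply/connectP; exists w; rewrite ?path_del_vertex ?pw.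
Qed.

Lemma cycle_free_nbrs_disconnected c1 c2 :
  ~ has_cycle t -> t c1 u -> t u c2 -> c1 != c2 -> c1 != u ->
  ~ connect del_vertex c1 c2.
Proof.
move=> t_acyclic tc1 tc2 c12 c1u /connectP[w0 pw0 c2E].
case: (shortenP pw0) c2E => w pw uniq_w _ {w0 pw0} c2E.
have uw : u \notin w.
  by apply: contraL pw => uw; rewrite path_del_vertex // uw andbF.
move: pw; rewrite path_del_vertex // uw andbT => pw.
apply: t_acyclic; exists u, (c1 :: w); split; last split.
- by case: w c2E {pw uniq_w uw} => [/= c2E|//]; rewrite c2E eqxx in c12.
- by rewrite cons_uniq uniq_w andbT inE negb_or eq_sym c1u.
- by rewrite /= t_sym tc1 pw /= -c2E t_sym.
Qed.

Lemma tree_path_separates p q s :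
  ~ has_cycle t -> gpath t p q s -> u \in s -> q != u ->
  ~ connect del_vertex p q.
Proof.
move=> t_acyclic [[pT lT] uT] us qu.
case/splitPr: us pT lT uT => s1 s2.
case: s2 => [|c2 s2]; first by rewrite last_cat => _ /= qE; rewrite qE eqxx in qu.
rewrite cat_path last_cat -cat_cons cat_uniq /= => /and4P[p1 tc1 tc2 p2] lT.
case/and5P=> _ /norP[ps1u /norP[c2ps1 _]] uc2s2 _ _.
set c1 := last p s1 in tc1.
have c1u : c1 != u by apply: contraNneq ps1u => <-; apply: mem_last.
have c12 : c1 != c2 by apply: contraNneq c2ps1 => <-; apply: mem_last.
have conn1 : connect del_vertex c1 p.
  by rewrite (sym_connect_sym del_vertex_sym) connect_del_vertex.
have conn2 : connect del_vertex c2 q by rewrite -lT connect_del_vertex.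
move=> pq; apply: (cycle_free_nbrs_disconnected t_acyclic tc1 tc2 c12 c1u).
apply: connect_trans conn1 (connect_trans pq _).
by rewrite (sym_connect_sym del_vertex_sym).
Qed.

Lemma short_walk_avoids x y w :
  x \notin closed_nbhd t u -> y \notin closed_nbhd t u ->
  walk t x y w -> size w <= 3 -> u \notin x :: w.
Proof.
move=> xN yN [pw yE] sw; subst y; move: xN yN.
rewrite !inE !negb_or eq_sym => /andP[xu tux] /andP[yu tuy]; rewrite xu /=.
case: w sw pw yu tuy => [|a [|b [|c [|? ?]]]] //= _ pw yu tuy;
  rewrite !inE ?negb_or ![u == _]eq_sym yu ?andbT //.
- by apply: contraNneq tuy => <-; case/and3P: pw.
- case/and4P: pw => txa _ tbc _; apply/andP; split.
    by apply: contraNneq tux => <-; rewrite t_sym.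
  by apply: contraNneq tuy => <-.
Qed.

End DeleteVertex.

Theorem lemma1 (V : finType) (g t : rel V) (u p q : V) :
  simple_graph g ->
  tree_3_spanner g t ->
  (* u lies on the (unique) p,q-path of T *)
  (exists s, gpath t p q s /\ u \in p :: s) ->
  p \notin closed_nbhd t u -> q \notin closed_nbhd t u ->
  forall s, gpath g p q s -> exists2 x, x \in p :: s & x \in closed_nbhd t u.
Proof.
move=> [_ g_irr] spanner [sT [pqT upT]] pN qN s [[ps qE] _].
have [_ [[[t_sym _] [_ t_acyclic]] _]] := spanner.
have us : u \in sT by move: upT; rewrite inE; case: eqP pN => // <-; rewrite inE eqxx.
have qu : q != u by apply: contraNneq qN => ->; rewrite inE eqxx.
have [/hasP // | noN] := boolP (has (mem (closed_nbhd t u)) (p :: s)).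
case: (tree_path_separates t_sym t_acyclic pqT us qu).
rewrite -qE; apply: (connect_path_in (P := [predC closed_nbhd t u])) ps _;
  last by rewrite all_predC.
move=> x y xN yN gxy; have [w wxy sw] := spanner_edge_walk g_irr spanner gxy.
case: (wxy) => pw <-; exact/connect_del_vertex/(short_walk_avoids t_sym xN yN wxy).
Qed.
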